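(* Let $a\colon\mathcal{D}(X)\to X$ be a convex set (an algebra of the distribution monad) and let $b\colon X\to\mathcal{D}(X)$ be a $\overline{\mathcal{D}}$-coalgebra on it. Then $\{x\in X\mid b(x)=1x\}=\partial X$, the set of extreme points of $X$.
   Context: The distribution monad $\mathcal{D}$ on $\mathbf{Sets}$ has $\mathcal{D}(X)=\{\varphi\colon X\to[0,1]\mid\mathrm{supp}(\varphi)\text{ finite},\ \sum_x\varphi(x)=1\}$, written as formal convex sums $\sum_i r_ix_i$, with unit $\eta(x)=1x$ and multiplication $\mu(\sum_i r_i\varphi_i)(x)=\sum_i r_i\varphi_i(x)$. Its Eilenberg–Moore algebras $a\colon\mathcal{D}(X)\to X$ are convex sets (interpreting formal convex sums as actual ones), and homomorphisms are affine maps. The induced comonad $\overline{\mathcal{D}}$ on convex sets sends $X$ to the free convex set $\mathcal{D}(X)$ with counit $a$ and comultiplication $\mathcal{D}(\eta_X)$; a $\overline{\mathcal{D}}$-coalgebra is an affine map $b\colon X\to\mathcal{D}(X)$ with $a\circ b=\mathrm{id}$ and $\mathcal{D}(\eta_X)\circ b=\mathcal{D}(b)\circ b$. A point $x\in X$ is extreme if whenever $x=\sum_i r_ix_i$ (convex sum in $X$) there is $j$ with $r_j=1$ and $x_j=x$. *)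

From Stdlib Require Import Reals Lra List ClassicalEpsilon.
Import ListNotations.
Open Scope R_scope.
Set Implicit Arguments.

Fixpoint rsum (l : list R) : R :=
  match l with nil => 0 | r :: t => r + rsum t end.

(** Finiteness of the support and the value of the sum are expressed with a
    duplicate-free list containing the support. *)
Definition is_dist {X : Type} (phi : X -> R) : Prop :=
  (forall x, 0 <= phi x) /\
  exists l : list X,
    NoDup l /\ (forall x, phi x <> 0 -> In x l) /\ rsum (map phi l) = 1.

Record distr (X : Type) := MkDistr { dfun :> X -> R; dfun_dist : is_dist dfun }.
Arguments MkDistr {X} dfun dfun_dist.

Definition supp {X} (d : distr X) : list X :=
  proj1_sig (constructive_indefinite_description _ (proj2 (dfun_dist d))).

Lemma supp_spec {X} (d : distr X) :
  NoDup (supp d) /\ (forall x, d x <> 0 -> In x (supp d)) /\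
  rsum (map d (supp d)) = 1.
Proof.
  unfold supp. destruct (constructive_indefinite_description _ _) as [l Hl].
  exact Hl.
Qed.

Definition ind (P : Prop) : R :=
  if excluded_middle_informative P then 1 else 0.

(** Formal convex sums  sum_i r_i x_i  (as lists of pairs (r_i, x_i)) and
    the function X -> R they denote: x |-> sum_i r_i [x_i = x]. *)
Definition valid {X} (l : list (R * X)) : Prop :=
  Forall (fun p => 0 <= fst p) l /\ rsum (map fst l) = 1.

Definition interp {X} (l : list (R * X)) (x : X) : R :=
  rsum (map (fun p => fst p * ind (snd p = x)) l).

Fixpoint dedup {X} (l : list X) : list X :=
  match l with
  | nil => nil
  | x :: t => if excluded_middle_informative (In x t) then dedup t else x :: dedup t
  end.

Lemma dedup_In {X} (l : list X) x : In x (dedup l) <-> In x l.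
Proof.
  induction l as [|y t IH]; simpl; [tauto|].
  destruct (excluded_middle_informative (In y t)); simpl; rewrite IH;
    intuition (subst; auto).
Qed.

Lemma dedup_NoDup {X} (l : list X) : NoDup (dedup l).
Proof.
  induction l as [|y t IH]; simpl; [constructor|].
  destruct (excluded_middle_informative (In y t)); auto.
  constructor; auto. rewrite dedup_In; auto.
Qed.

Lemma rsum_app l1 l2 : rsum (l1 ++ l2) = rsum l1 + rsum l2.
Proof. induction l1; simpl; lra. Qed.

Lemma rsum_plus {A} (f g : A -> R) l :
  rsum (map (fun y => f y + g y) l) = rsum (map f l) + rsum (map g l).
Proof. induction l; simpl; lra. Qed.

Lemma rsum_scal {A} (r : R) (f : A -> R) l :
  rsum (map (fun y => r * f y) l) = r * rsum (map f l).
Proof. induction l; simpl; lra. Qed.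

Lemma rsum_ext {A} (f g : A -> R) l :
  (forall y, In y l -> f y = g y) -> rsum (map f l) = rsum (map g l).
Proof.
  induction l; simpl; intros H; auto.
  rewrite H, IHl; auto.
Qed.

Lemma rsum_nonneg {A} (f : A -> R) l :
  (forall y, In y l -> 0 <= f y) -> 0 <= rsum (map f l).
Proof.
  induction l; simpl; intros H; [lra|].
  assert (0 <= f a) by auto. assert (0 <= rsum (map f l)) by auto. lra.
Qed.

Lemma ind_nonneg P : 0 <= ind P.
Proof. unfold ind; destruct excluded_middle_informative; lra. Qed.

Lemma rsum_ind_out {X} (x : X) D :
  ~ In x D -> rsum (map (fun y => ind (x = y)) D) = 0.
Proof.
  induction D; simpl; intros H; auto.
  unfold ind at 1; destruct excluded_middle_informative; [subst; tauto|].
  rewrite IHD; auto. lra.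
Qed.

Lemma rsum_ind_in {X} (x : X) D :
  NoDup D -> In x D -> rsum (map (fun y => ind (x = y)) D) = 1.
Proof.
  induction D; simpl; intros Hn Hi; [tauto|].
  inversion Hn; subst.
  unfold ind at 1; destruct excluded_middle_informative.
  - subst. rewrite rsum_ind_out; auto. lra.
  - destruct Hi; [congruence|]. rewrite IHD; auto. lra.
Qed.

Lemma interp_cover {X} (l : list (R * X)) x :
  interp l x <> 0 -> In x (map snd l).
Proof.
  unfold interp. induction l as [|p t IH]; simpl; intros Hx; [lra|].
  unfold ind at 1 in Hx; destruct excluded_middle_informative; auto.
  right. apply IH. lra.
Qed.

Lemma interp_sum {X} (l : list (R * X)) D :
  NoDup D -> (forall p, In p l -> In (snd p) D) ->
  rsum (map (interp l) D) = rsum (map fst l).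
Proof.
  intros Hn. induction l as [|p t IH]; simpl; intros Hin.
  - unfold interp; simpl. clear Hn Hin. induction D; simpl; auto. rewrite IHD; lra.
  - unfold interp; simpl.
    rewrite (rsum_plus (fun y => fst p * ind (snd p = y))
                       (fun y => rsum (map (fun q => fst q * ind (snd q = y)) t))).
    rewrite rsum_scal, rsum_ind_in; auto.
    fold (interp t). rewrite IH; auto. lra.
Qed.

Lemma interp_dist {X} (l : list (R * X)) : valid l -> is_dist (interp l).
Proof.
  intros [Hpos Hsum]. split.
  - intro x. unfold interp. apply rsum_nonneg. intros p Hp.
    rewrite Forall_forall in Hpos. specialize (Hpos p Hp).
    pose proof (ind_nonneg (snd p = x)). nra.
  - exists (dedup (map snd l)). split; [apply dedup_NoDup|split].
    + intros x Hx. apply dedup_In. apply interp_cover; auto.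
    + rewrite interp_sum; auto. apply dedup_NoDup.
      intros p Hp. apply dedup_In. apply in_map; auto.
Qed.

Definition mkD {X} (l : list (R * X)) (H : valid l) : distr X :=
  MkDistr (interp l) (interp_dist H).

Definition repr {X} (d : distr X) : list (R * X) := map (fun x => (d x, x)) (supp d).

Lemma repr_valid {X} (d : distr X) : valid (repr d).
Proof.
  unfold repr. split.
  - apply Forall_forall. intros p Hp. apply in_map_iff in Hp.
    destruct Hp as [x [<- _]]. simpl. apply (proj1 (dfun_dist d)).
  - rewrite map_map. simpl. apply (supp_spec d).
Qed.

Lemma eta_valid {X} (x : X) : valid [(1, x)].
Proof. split; [constructor; simpl; [lra|constructor]|simpl; lra]. Qed.
Definition eta {X} (x : X) : distr X := mkD (eta_valid x).

Definition Dmap_list {X Y} (f : X -> Y) (d : distr X) : list (R * Y) :=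
  map (fun p => (fst p, f (snd p))) (repr d).
Lemma Dmap_valid {X Y} (f : X -> Y) d : valid (Dmap_list f d).
Proof.
  destruct (repr_valid d) as [H1 H2]. unfold Dmap_list. split.
  - rewrite Forall_forall in *. intros p Hp. apply in_map_iff in Hp.
    destruct Hp as [q [<- Hq]]. simpl. auto.
  - rewrite map_map. simpl. exact H2.
Qed.
Definition Dmap {X Y} (f : X -> Y) (d : distr X) : distr Y := mkD (Dmap_valid f d).

(** Multiplication: mu(sum_i r_i phi_i)(x) = sum_i r_i phi_i(x). *)
Definition mu_list {X} (P : distr (distr X)) : list (R * X) :=
  flat_map (fun psi => map (fun p => (P psi * fst p, snd p)) (repr psi)) (supp P).

Lemma rsum_flat_map {A B} (g : B -> R) (f : A -> list B) l :
  rsum (map g (flat_map f l)) = rsum (map (fun a => rsum (map g (f a))) l).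
Proof. induction l; simpl; auto. rewrite map_app, rsum_app, IHl. auto. Qed.

Lemma mu_valid {X} (P : distr (distr X)) : valid (mu_list P).
Proof.
  unfold mu_list. split.
  - apply Forall_forall. intros p Hp. apply in_flat_map in Hp.
    destruct Hp as [psi [_ Hp]]. apply in_map_iff in Hp.
    destruct Hp as [q [<- Hq]]. simpl.
    destruct (repr_valid psi) as [H1 _]. rewrite Forall_forall in H1.
    pose proof (H1 q Hq). pose proof (proj1 (dfun_dist P) psi). nra.
  - rewrite rsum_flat_map.
    rewrite (rsum_ext _ (fun psi => P psi)). apply (supp_spec P).
    intros psi _. rewrite map_map. simpl.
    rewrite (rsum_scal (P psi) fst). destruct (repr_valid psi) as [_ H2].
    rewrite H2. lra.
Qed.
Definition mu {X} (P : distr (distr X)) : distr X := mkD (mu_valid P).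

(** Eilenberg–Moore algebras of D (= convex sets). *)
Definition is_algebra {X} (a : distr X -> X) : Prop :=
  (forall x, a (eta x) = x) /\
  (forall P : distr (distr X), a (mu P) = a (Dmap a P)).

(** Coalgebras of the induced comonad on convex sets: b : X -> D(X) affine
    (a homomorphism of algebras (X,a) -> (D(X),mu)) with a o b = id and
    D(eta) o b = D(b) o b. *)
Definition is_coalgebra {X} (a : distr X -> X) (b : X -> distr X) : Prop :=
  (forall phi : distr X, b (a phi) = mu (Dmap b phi)) /\
  (forall x, a (b x) = x) /\
  (forall x, Dmap eta (b x) = Dmap b (b x)).

(** Extreme points: whenever x = sum_i r_i x_i (i.e. x = a(phi) with
    phi = sum_i r_i x_i a distribution, x_i ranging over its support),
    some j has r_j = phi(x_j) = 1 and x_j = x. *)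
Definition extreme {X} (a : distr X -> X) (x : X) : Prop :=
  forall phi : distr X, a phi = x -> exists y, phi y = 1 /\ y = x.

From Pilot Require Import Defs.
From Stdlib Require Import Reals.
From Stdlib Require Import ClassicalEpsilon Lra List FunctionalExtensionality ProofIrrelevance.
Import ListNotations.
Open Scope R_scope.

(* The argument only needs two quantitative facts about the monad:
   every weight of a formal convex sum is a lower bound for the
   distribution it denotes, so that  P(psi) * psi(z) <= mu(P)(z)  and
   phi(y) <= D(f)(phi)(f y);  and a distribution is the point mass
   eta x exactly when it gives x weight 1 (equivalently, when its support
   is {x}).

   - If x is extreme, apply extremality to the decomposition x = a(b x):
     b x gives x weight 1, hence b x = eta x.
   - If b x = eta x and x = a(phi), affineness of b gives
     mu(D(b)(phi)) = b x = eta x.  A point mass can only be a mixture of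
     copies of itself, so b y = eta x for every y in the support of phi,
     whence y = a(b y) = a(eta x) = x.  Thus phi is supported on {x},
     i.e. phi(x) = 1. *)

Lemma rsum_ge_term {A} (f : A -> R) l y :
  (forall w, In w l -> 0 <= f w) -> In y l -> f y <= rsum (map f l).
Proof.
  induction l as [|h t IH]; simpl; intros Hnn Hy; [tauto|].
  assert (Hnn' : forall w, In w t -> 0 <= f w) by auto.
  destruct Hy as [<-|Hy].
  - pose proof (rsum_nonneg f t Hnn'). lra.
  - pose proof (Hnn h (or_introl eq_refl)). pose proof (IH Hnn' Hy). lra.
Qed.

Lemma rsum_ge_two_terms {A} (f : A -> R) l x y :
  NoDup l -> (forall w, In w l -> 0 <= f w) -> In x l -> In y l -> x <> y ->
  f x + f y <= rsum (map f l).
Proof.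
  induction l as [|h t IH]; simpl; intros Hnd Hnn Hx Hy Hxy; [tauto|].
  inversion Hnd as [|? ? Hh Ht]; subst.
  assert (Hnn' : forall w, In w t -> 0 <= f w) by auto.
  destruct Hx as [<-|Hx]; destruct Hy as [<-|Hy].
  - congruence.
  - pose proof (rsum_ge_term f t y Hnn' Hy). lra.
  - pose proof (rsum_ge_term f t x Hnn' Hx). lra.
  - pose proof (Hnn h (or_introl eq_refl)). pose proof (IH Ht Hnn' Hx Hy Hxy). lra.
Qed.

Lemma dist_nonneg {X} (d : distr X) z : 0 <= d z.
Proof. apply (proj1 (dfun_dist d)). Qed.

Lemma eta_eval {X} (x z : X) : eta x z = Defs.ind (x = z).
Proof. unfold eta, mkD, interp; simpl. lra. Qed.

Lemma dist_one_vanishes {X} (d : distr X) x z : d x = 1 -> z <> x -> d z = 0.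
Proof.
  intros Hx Hz. destruct (Req_dec (d z) 0) as [|Hdz]; auto.
  destruct (supp_spec d) as [Hnd [Hcov Hsum]].
  pose proof (rsum_ge_two_terms d (supp d) x z Hnd (fun w _ => dist_nonneg d w)
    (Hcov x ltac:(lra)) (Hcov z Hdz) (fun e => Hz (eq_sym e))).
  pose proof (dist_nonneg d z). lra.
Qed.

Lemma dist_support_single {X} (d : distr X) x :
  (forall z, d z <> 0 -> z = x) -> d x = 1.
Proof.
  intros Hsupp. destruct (supp_spec d) as [Hnd [_ Hsum]].
  rewrite (rsum_ext _ (fun z => d x * Defs.ind (x = z))) in Hsum.
  - rewrite rsum_scal in Hsum.
    destruct (excluded_middle_informative (In x (supp d))) as [Hi|Hi].
    + rewrite rsum_ind_in in Hsum; auto. lra.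
    + rewrite rsum_ind_out in Hsum; auto. lra.
  - intros z _. unfold Defs.ind. destruct excluded_middle_informative as [<-|Hxz]; [lra|].
    destruct (Req_dec (d z) 0) as [->|Hdz]; [lra|].
    exfalso. apply Hxz. symmetry. auto.
Qed.

Lemma dist_eq_eta {X} (d : distr X) x : d x = 1 -> d = eta x.
Proof.
  intros Hx. destruct d as [f Hf].
  assert (Hfun : f = interp [(1, x)]).
  { apply functional_extensionality. intro z.
    change (interp [(1, x)] z) with (dfun (eta x) z). rewrite eta_eval.
    unfold Defs.ind. destruct excluded_middle_informative as [<-|Hxz]; [exact Hx|].
    apply (dist_one_vanishes (MkDistr f Hf) x); auto. }
  subst f. unfold eta, mkD. f_equal. apply proof_irrelevance.
Qed.

Lemma interp_ge_weight {X} (l : list (R * X)) r z :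
  Forall (fun p => 0 <= fst p) l -> In (r, z) l -> r <= interp l z.
Proof.
  intros Hnn Hin. rewrite Forall_forall in Hnn. unfold interp.
  eapply Rle_trans;
    [|apply (rsum_ge_term (fun p : R * X => fst p * Defs.ind (snd p = z)) l (r, z))].
  - simpl. unfold Defs.ind. destruct excluded_middle_informative; [lra|tauto].
  - intros p Hp. pose proof (Hnn p Hp). pose proof (ind_nonneg (snd p = z)). nra.
  - exact Hin.
Qed.

Lemma mu_ge {X} (P : distr (distr X)) psi z : P psi * psi z <= mu P z.
Proof.
  destruct (Req_dec (P psi * psi z) 0) as [->|Hne]; [apply dist_nonneg|].
  apply interp_ge_weight; [apply (mu_valid P)|].
  apply in_flat_map. exists psi. split.
  - apply (supp_spec P). intro H0. apply Hne. rewrite H0. lra.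
  - apply (in_map (fun p => (P psi * fst p, snd p)) _ (psi z, z)).
    apply (in_map (fun w => (psi w, w))).
    apply (supp_spec psi). intro H0. apply Hne. rewrite H0. lra.
Qed.

Lemma Dmap_ge {X Y} (f : X -> Y) (phi : distr X) y : phi y <= Dmap f phi (f y).
Proof.
  destruct (Req_dec (phi y) 0) as [->|Hne]; [apply dist_nonneg|].
  apply interp_ge_weight; [apply (Dmap_valid f phi)|].
  apply (in_map (fun p => (fst p, f (snd p))) _ (phi y, y)).
  apply (in_map (fun w => (phi w, w))). apply (supp_spec phi). exact Hne.
Qed.

Lemma mu_eta_components {X} (P : distr (distr X)) x psi :
  mu P = eta x -> P psi <> 0 -> psi = eta x.
Proof.
  intros Hmu HP. apply dist_eq_eta, dist_support_single. intros z Hz.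
  destruct (classic (z = x)) as [|Hzx]; auto. exfalso.
  pose proof (mu_ge P psi z) as Hle.
  rewrite Hmu, eta_eval in Hle. unfold Defs.ind in Hle.
  destruct excluded_middle_informative as [e|_]; [congruence|].
  pose proof (dist_nonneg P psi). pose proof (dist_nonneg psi z).
  assert (0 < P psi) by lra. assert (0 < psi z) by lra. nra.
Qed.

Theorem mainTheorem5 (X : Type) (a : distr X -> X) (b : X -> distr X)
  (Ha : is_algebra a) (Hb : is_coalgebra a b) (x : X) :
  b x = eta x <-> extreme a x.
Proof.
  destruct Ha as [a_unit _]. destruct Hb as [b_affine [b_section _]].
  split.
  - intros Hbx phi Hphi.
    assert (Hmix : mu (Dmap b phi) = eta x) by (rewrite <- b_affine, Hphi; exact Hbx).
    assert (Hsupp : forall y, phi y <> 0 -> y = x).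
    { intros y Hy.
      assert (Hweight : Dmap b phi (b y) <> 0).
      { pose proof (Dmap_ge b phi y). pose proof (dist_nonneg phi y). lra. }
      rewrite <- (b_section y), (mu_eta_components _ _ _ Hmix Hweight). apply a_unit. }
    exists x. split; [apply dist_support_single|]; auto.
  - intros Hext. destruct (Hext (b x) (b_section x)) as [y [Hy ->]].
    apply dist_eq_eta. exact Hy.
Qed.
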